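(* For any finite multisets of formulas $\Pi$ and $\Sigma$, the inference rule $\mathsf{wk}_{\Pi,\Sigma}$: from $\Gamma\Rightarrow\Delta$ infer $\Pi,\Gamma\Rightarrow\Delta,\Sigma$ (for arbitrary $\Gamma,\Delta$) is strongly admissible in $\mathsf{Grz}_\infty+\mathsf{cut}$.
   Context: Formulas are built from $\bot$ and atoms by $\to$ and $\Box$; sequents $\Gamma\Rightarrow\Delta$ have finite multisets of formulas on each side; $\Box\Pi$ denotes $\{\Box B:B\in\Pi\}$. The calculus $\mathsf{Grz}_\infty+\mathsf{cut}$ has initial sequents $\Gamma,p\Rightarrow p,\Delta$ ($p$ atomic), $\Gamma,\bot\Rightarrow\Delta$, and rules $(\to_L)$ from $\Gamma,B\Rightarrow\Delta$ and $\Gamma\Rightarrow A,\Delta$ infer $\Gamma,A\to B\Rightarrow\Delta$; $(\to_R)$ from $\Gamma,A\Rightarrow B,\Delta$ infer $\Gamma\Rightarrow A\to B,\Delta$; $(\mathsf{refl})$ from $\Gamma,B,\Box B\Rightarrow\Delta$ infer $\Gamma,\Box B\Rightarrow\Delta$; $(\Box)$ from left premise $\Gamma,\Box\Pi\Rightarrow A,\Delta$ and right premise $\Box\Pi\Rightarrow A$ infer $\Gamma,\Box\Pi\Rightarrow\Box A,\Delta$; $(\mathsf{cut})$ from $\Gamma\Rightarrow A,\Delta$ and $\Gamma,A\Rightarrow\Delta$ infer $\Gamma\Rightarrow\Delta$. An $\infty$-proof is a possibly infinite tree of sequents built by these rules with leaves labelled by initial sequents, in which every infinite branch passes through a right premise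 of $(\Box)$ infinitely often; $\mathcal P$ is the set of all $\infty$-proofs. The $n$-fragment of an $\infty$-proof is the finite tree obtained by cutting every branch at the $n$-th (from the root) right premise of $(\Box)$; the main fragment is the $1$-fragment; the local height $|\pi|$ is the length of the longest branch of the main fragment (an $\infty$-proof consisting only of an initial sequent has height $0$). Write $\pi\sim_n\tau$ if the $n$-fragments of $\pi,\tau$ coincide, and $\pi\sim_0\tau$ always. $\mathcal P_n$ is the set of $\infty$-proofs with no application of $(\mathsf{cut})$ in their $n$-fragment, and $\mathcal P_0=\mathcal P$. A single-premise rule is strongly admissible in $\mathsf{Grz}_\infty+\mathsf{cut}$ if there is a mapping $\mathsf u:\mathcal P\to\mathcal P$ such that: (i) $\mathsf u$ is non-expansive: $\pi\sim_n\pi'$ implies $\mathsf u(\pi)\sim_n\mathsf u(\pi')$ for all $n$; (ii) $\mathsf u$ is adequate: $\pi\in\mathcal P_n$ implies $\mathsf u(\pi)\in\mathcal P_n$ for all $n$; (iii) $|\mathsf u(\pi)|\le|\pi|$ for all $\pi\in\mathcal P$; (iv) for every instance of the rule, $\mathsf u$ maps every $\infty$-proof of its premise to an $\infty$-proof of its conclusion. *)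

From HB Require Import structures.
From mathcomp Require Import all_boot.
From mathcomp Require Import finmap multiset.

Set Implicit Arguments.
Unset Strict Implicit.
Unset Printing Implicit Defensive.

Local Open Scope mset_scope.

Inductive formula : Type :=
| Bot : formula
| Atom : nat -> formula
| Imp : formula -> formula -> formula
| Box : formula -> formula.

Fixpoint formula_enc (A : formula) : GenTree.tree nat :=
  match A with
  | Bot => GenTree.Node 0 [::]
  | Atom p => GenTree.Leaf p
  | Imp A B => GenTree.Node 1 [:: formula_enc A; formula_enc B]
  | Box A => GenTree.Node 2 [:: formula_enc A]
  end.

Fixpoint formula_dec (t : GenTree.tree nat) : option formula :=
  match t with
  | GenTree.Leaf p => Some (Atom p)
  | GenTree.Node 0 [::] => Some Bot
  | GenTree.Node 1 [:: a; b] =>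
      match formula_dec a, formula_dec b with
      | Some A, Some B => Some (Imp A B)
      | _, _ => None
      end
  | GenTree.Node 2 [:: a] =>
      match formula_dec a with Some A => Some (Box A) | None => None end
  | _ => None
  end.

Lemma formula_encK : pcancel formula_enc formula_dec.
Proof. by elim=> //= [A -> B ->|A ->]. Qed.

HB.instance Definition _ := Countable.copy formula (pcan_type formula_encK).

Definition fmset := {mset formula}.
Definition sequent : Type := (fmset * fmset)%type.

Definition mbox (Pi : fmset) : fmset := seq_mset [seq Box B | B <- enum_mset Pi].

Inductive rtag : Type := RAxAt | RAxBot | RImpL | RImpR | RRefl | RBox | RCut.

(* [rule_inst r prem concl]: the list of premises [prem] and conclusion [concl]
   form an instance of the rule [r] (premises in the order of the paper;
   for (Box) the left premise is first and the right premise second). *)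
Definition rule_inst (r : rtag) (prem : seq sequent) (concl : sequent) : Prop :=
  match r with
  | RAxAt => prem = [::] /\
      exists (G D : fmset) (p : nat),
        concl = (Atom p +` G, Atom p +` D)
  | RAxBot => prem = [::] /\
      exists G D : fmset, concl = (Bot +` G, D)
  | RImpL => exists (G D : fmset) (A B : formula),
      prem = [:: (B +` G, D); (G, A +` D)] /\ concl = (Imp A B +` G, D)
  | RImpR => exists (G D : fmset) (A B : formula),
      prem = [:: (A +` G, B +` D)] /\ concl = (G, Imp A B +` D)
  | RRefl => exists (G D : fmset) (B : formula),
      prem = [:: (B +` (Box B +` G), D)] /\ concl = (Box B +` G, D)
  | RBox => exists (G D Pi : fmset) (A : formula),
      prem = [:: (G `+` mbox Pi, A +` D); (mbox Pi, [mset A])] /\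
      concl = (G `+` mbox Pi, Box A +` D)
  | RCut => exists (G D : fmset) (A : formula),
      prem = [:: (G, A +` D); (A +` G, D)] /\ concl = (G, D)
  end.

CoInductive ptree : Type :=
| PNode : sequent -> rtag -> seq ptree -> ptree.

Definition seqt (t : ptree) : sequent := let: PNode s _ _ := t in s.
Definition tagt (t : ptree) : rtag := let: PNode _ r _ := t in r.
Definition kids (t : ptree) : seq ptree := let: PNode _ _ ch := t in ch.

Definition dflt_tree : ptree := PNode (mset0, mset0) RAxBot [::].

Definition rprem (r : rtag) (i : nat) : bool :=
  if r is RBox then i == 1 else false.

CoInductive loc_correct : ptree -> Prop :=
| LocCorrect s r ch :
    rule_inst r [seq seqt c | c <- ch] s ->
    (forall i, i < size ch -> loc_correct (nth dflt_tree ch i)) ->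
    loc_correct (PNode s r ch).

(* infinite branches: f k is the k-th node, d k the index of the premise taken *)
Definition is_branch (t : ptree) (f : nat -> ptree) (d : nat -> nat) : Prop :=
  f 0 = t /\
  forall k, d k < size (kids (f k)) /\ f k.+1 = nth dflt_tree (kids (f k)) (d k).

Definition branch_cond (t : ptree) : Prop :=
  forall f d, is_branch t f d ->
  forall N, exists k, N <= k /\ rprem (tagt (f k)) (d k).

Definition inf_proof (t : ptree) : Prop := loc_correct t /\ branch_cond t.

(* [frag_eq n t t']: the n-fragments of t and t' coincide, the n-fragment being
   obtained by cutting every branch at the n-th right premise of (Box)
   (that node is kept as a leaf, labelled by its sequent only);
   frag_eq 0 always holds. *)
CoInductive frag_eq : nat -> ptree -> ptree -> Prop :=
| FragEq0 t t' : frag_eq 0 t t'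
| FragEqS n s r ch ch' :
    size ch = size ch' ->
    (forall i, i < size ch ->
       seqt (nth dflt_tree ch i) = seqt (nth dflt_tree ch' i)) ->
    (forall i, i < size ch ->
       frag_eq (if rprem r i then n else n.+1)
               (nth dflt_tree ch i) (nth dflt_tree ch' i)) ->
    frag_eq n.+1 (PNode s r ch) (PNode s r ch').

CoInductive no_cut : nat -> ptree -> Prop :=
| NoCut0 t : no_cut 0 t
| NoCutS n s r ch :
    r <> RCut ->
    (forall i, i < size ch ->
       no_cut (if rprem r i then n else n.+1) (nth dflt_tree ch i)) ->
    no_cut n.+1 (PNode s r ch).

Definition P_n (n : nat) (t : ptree) : Prop := inf_proof t /\ no_cut n t.

(* [lheight_le k t]: every branch of the main fragment of t has length <= k,
   i.e. the local height |t| is at most k. *)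
Fixpoint lheight_le (k : nat) (t : ptree) : Prop :=
  match k with
  | 0 => kids t = [::]
  | k'.+1 => forall i, i < size (kids t) ->
      rprem (tagt t) i \/ lheight_le k' (nth dflt_tree (kids t) i)
  end.

Definition lheight_leq (u t : ptree) : Prop :=
  forall k, lheight_le k t -> lheight_le k u.

Definition strongly_admissible (R : sequent -> sequent -> Prop) : Prop :=
  exists u : ptree -> ptree,
    (forall pi, inf_proof pi -> inf_proof (u pi)) /\
    (forall n pi pi', inf_proof pi -> inf_proof pi' ->
       frag_eq n pi pi' -> frag_eq n (u pi) (u pi')) /\
    (forall n pi, P_n n pi -> P_n n (u pi)) /\
    (forall pi, inf_proof pi -> lheight_leq (u pi) pi) /\
    (forall prem concl pi, R prem concl -> inf_proof pi -> seqt pi = prem ->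
       seqt (u pi) = concl).

Definition wk_rule (Pi Sigma : fmset) (prem concl : sequent) : Prop :=
  exists G D : fmset, prem = (G, D) /\ concl = (Pi `+` G, D `+` Sigma).

From mathcomp Require Import all_boot.
From mathcomp Require Import finmap multiset.

Set Implicit Arguments.
Unset Strict Implicit.
Unset Printing Implicit Defensive.

(* Weakening is pushed through the main fragment: every sequent below the
   right premises of (Box) receives the extra formulas, while the subproofs
   rooted at right premises of (Box) are kept verbatim (their antecedents must
   consist of boxed formulas only, so they could not be weakened anyway).  All
   other premises share their context with the conclusion, so each node stays
   a correct rule application.  The tree shape and the rule labels are
   untouched, which preserves branches, fragments, cut-freeness and local
   height. *)

Local Open Scope mset_scope.

(* Map [f] over the premises of a rule [r] that lie in the same fragment as
   its conclusion, i.e. all but the right premise of (Box); no rule has more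
   than two premises, so the remaining ones are left alone. *)
Definition map_main_prems (T : Type) (f : T -> T) (r : rtag) (xs : seq T) : seq T :=
  match xs with
  | [::] => [::]
  | [:: x1] => [:: f x1]
  | x1 :: x2 :: xs' => f x1 :: (if r is RBox then x2 else f x2) :: xs'
  end.

Definition main_prem (r : rtag) (i : nat) : bool := ~~ rprem r i && (i < 2).

Section MapMainPrems.

Variables (T : Type) (f : T -> T) (r : rtag).

Lemma size_map_main_prems xs : size (map_main_prems f r xs) = size xs.
Proof. by case: xs => [|x1 [|x2 xs]] //=; case: r. Qed.

Lemma nth_map_main_prems x0 xs i : i < size xs ->
  nth x0 (map_main_prems f r xs) i =
  if main_prem r i then f (nth x0 xs i) else nth x0 xs i.
Proof.
by case: xs => [|x1 [|x2 xs]] //=; case: i => [|[|i]] //=; case: r.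
Qed.

Lemma map_map_main_prems U (g : T -> U) (f' : U -> U) xs :
  (forall x, g (f x) = f' (g x)) ->
  map g (map_main_prems f r xs) = map_main_prems f' r (map g xs).
Proof. by move=> gf; case: xs => [|x1 [|x2 xs]]; case: r; rewrite /= ?gf. Qed.

End MapMainPrems.

Section Weakening.

Variables Pi Sigma : fmset.

Definition weaken_seq (s : sequent) : sequent := (Pi `+` s.1, s.2 `+` Sigma).

(* The body is [map_main_prems weaken r ch] unfolded, so that the guard
   checker sees the corecursive calls under constructors. *)
CoFixpoint weaken (t : ptree) : ptree :=
  let: PNode s r ch := t in
  PNode (weaken_seq s) r
    match ch with
    | [::] => [::]
    | [:: c1] => [:: weaken c1]
    | c1 :: c2 :: ch' => weaken c1 :: (if r is RBox then c2 else weaken c2) :: ch'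
    end.

Lemma weaken_unfold s r ch :
  weaken (PNode s r ch) = PNode (weaken_seq s) r (map_main_prems weaken r ch).
Proof.
have ptree_eta (t : ptree) : t = let: PNode s r ch := t in PNode s r ch.
  by case: t.
by rewrite [weaken _]ptree_eta.
Qed.

Lemma seqt_weaken t : seqt (weaken t) = weaken_seq (seqt t).
Proof. by case: t => s r ch; rewrite weaken_unfold. Qed.

Lemma tagt_weaken t : tagt (weaken t) = tagt t.
Proof. by case: t => s r ch; rewrite weaken_unfold. Qed.

Lemma kids_weaken t : kids (weaken t) = map_main_prems weaken (tagt t) (kids t).
Proof. by case: t => s r ch; rewrite weaken_unfold. Qed.

Lemma rule_inst_weaken r ps s : rule_inst r ps s ->
  rule_inst r (map_main_prems weaken_seq r ps) (weaken_seq s).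
Proof.
have addl a G : Pi `+` (a +` G) = a +` (Pi `+` G) by rewrite msetDCA.
have addr a D : (a +` D) `+` Sigma = a +` (D `+` Sigma) by rewrite msetDA.
rewrite /weaken_seq; case: r => /=.
- case=> -> [G [D [p ->]]]; split=> //.
  by exists (Pi `+` G), (D `+` Sigma), p; rewrite /= addl addr.
- case=> -> [G [D ->]]; split=> //.
  by exists (Pi `+` G), (D `+` Sigma); rewrite /= addl.
- case=> [G [D [A [B [-> ->]]]]].
  by exists (Pi `+` G), (D `+` Sigma), A, B; rewrite /= !addl addr.
- case=> [G [D [A [B [-> ->]]]]].
  by exists (Pi `+` G), (D `+` Sigma), A, B; rewrite /= addl !addr.
- case=> [G [D [B [-> ->]]]].
  by exists (Pi `+` G), (D `+` Sigma), B; rewrite /= !addl.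
- case=> [G [D [P [A [-> ->]]]]].
  by exists (Pi `+` G), (D `+` Sigma), P, A; rewrite /= msetDA !addr.
- case=> [G [D [A [-> ->]]]].
  by exists (Pi `+` G), (D `+` Sigma), A; rewrite /= addl addr.
Qed.

Lemma loc_correct_weaken t : loc_correct t -> loc_correct (weaken t).
Proof.
move: t; cofix CIH => _ [s r ch Hrule Hkids].
rewrite weaken_unfold; apply: LocCorrect.
  rewrite (map_map_main_prems _ _ seqt_weaken).
  exact: rule_inst_weaken.
move=> i; rewrite size_map_main_prems => Hi; rewrite nth_map_main_prems //.
by case: main_prem; [apply: CIH|]; apply: Hkids.
Qed.

Lemma frag_eq_weaken n t t' : frag_eq n t t' -> frag_eq n (weaken t) (weaken t').
Proof.
move: n t t'; cofix CIH => n t t' [? ?|{}n s r ch ch' Hsize Hseqt Hfrag].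
  exact: FragEq0.
rewrite !weaken_unfold; apply: FragEqS; rewrite ?size_map_main_prems //.
  move=> i Hi; rewrite !nth_map_main_prems -?Hsize //.
  by case: main_prem; rewrite ?seqt_weaken Hseqt.
move=> i Hi; rewrite !nth_map_main_prems -?Hsize //.
by case: main_prem; [apply: CIH|]; apply: Hfrag.
Qed.

Lemma no_cut_weaken n t : no_cut n t -> no_cut n (weaken t).
Proof.
move: n t; cofix CIH => n t [?|{}n s r ch Hcut Hkids].
  exact: NoCut0.
rewrite weaken_unfold; apply: NoCutS => // i.
rewrite size_map_main_prems => Hi; rewrite nth_map_main_prems //.
by case: main_prem; [apply: CIH|]; apply: Hkids.
Qed.

Lemma lheight_le_weaken k t : lheight_le k t -> lheight_le k (weaken t).
Proof.
elim: k t => [|k IHk] [s r ch]; rewrite weaken_unfold /=; first by move->.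
rewrite size_map_main_prems => Hk i Hi; rewrite nth_map_main_prems //.
by case: (Hk i Hi) => [|Hki]; [left|right; case: main_prem; [apply: IHk|]].
Qed.

Fixpoint follow (t : ptree) (d : nat -> nat) (k : nat) : ptree :=
  if k is k'.+1 then nth dflt_tree (kids (follow t d k')) (d k') else t.

Lemma branch_weaken t f d : is_branch (weaken t) f d ->
  forall k, f k = follow t d k \/ f k = weaken (follow t d k).
Proof.
case=> f0 fS; elim=> [|k IHk]; first by right.
have [+ ->] := fS k; case: IHk => -> dk; first by left.
rewrite kids_weaken size_map_main_prems in dk *.
by rewrite nth_map_main_prems //; case: main_prem; [right|left].
Qed.

Lemma branch_cond_weaken t : branch_cond t -> branch_cond (weaken t).
Proof.
move=> Ht f d fd.
have fk k : tagt (f k) = tagt (follow t d k) /\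
            size (kids (f k)) = size (kids (follow t d k)).
  by case: (branch_weaken fd k) => ->; rewrite ?tagt_weaken ?kids_weaken
    ?size_map_main_prems.
have td : is_branch t (follow t d) d.
  by split=> // k; split=> //; rewrite -(fk k).2; case: fd => _ /(_ k) [].
move=> N; have [k [Nk rk]] := Ht _ _ td N.
by exists k; rewrite (fk k).1.
Qed.

Lemma inf_proof_weaken t : inf_proof t -> inf_proof (weaken t).
Proof.
by case=> Hloc Hbr; split; [apply: loc_correct_weaken|apply: branch_cond_weaken].
Qed.

End Weakening.

Theorem lemma5p1 (Pi Sigma : fmset) : strongly_admissible (wk_rule Pi Sigma).
Proof.
exists (weaken Pi Sigma); split; first exact: inf_proof_weaken.
split; first by move=> n pi pi' _ _; apply: frag_eq_weaken.
split; first by move=> n pi [Hpi Hcut]; split;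
  [apply: inf_proof_weaken|apply: no_cut_weaken].
split; first by move=> pi _ k; apply: lheight_le_weaken.
by move=> _ _ pi [G [D [-> ->]]] _ Hpi; rewrite seqt_weaken Hpi.
Qed.
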